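(* Let $\omega\in\mathbb{F}_8$ be a root of $y^3+y+1$, so $\mathbb{F}_8=\mathbb{F}_2(\omega)$, and let $\mathcal{B}=\{1<\omega<\omega^2\}$ be the ordered basis of $\mathbb{F}_8$ over $\mathbb{F}_2$. Suppose $G=G_1+\omega G_2+\omega^2 G_3\in M_{k\times n}(\mathbb{F}_8)$, with $G_i\in M_{k\times n}(\mathbb{F}_2)$ for $1\le i\le 3$, generates a linear code $C$ over $\mathbb{F}_8$. Then the subfield code $C^{(2)}$ of $C$ with respect to $\mathcal{B}$ is the binary linear code generated by the $3k\times n$ matrix $$G^{(2)}=\begin{pmatrix}G_1\\ G_3\\ G_2\end{pmatrix}.$$ Moreover, if $D=D_1+\omega D_2+\omega^2 D_3\subseteq\mathbb{F}_8^m$ with $D_i\subseteq\mathbb{F}_2^m$ ($1\le i\le 3$), then $C_D^{(2)}=C_{D^{(2)}}$, where $$D^{(2)}=\{(d_1,d_3,d_2)\in(\mathbb{F}_2^m)^3 : d_i\in D_i,\ 1\le i\le 3\},$$ the coordinate of $C_{D^{(2)}}$ indexed by $(d_1,d_3,d_2)$ corresponding to the coordinate of $C_D$ indexed by $d_1+\omega d_2+\omega^2 d_3$.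
   Context: For sets $D_1,D_2,D_3\subseteq\mathbb{F}_2^m$, $D_1+\omega D_2+\omega^2D_3=\{d_1+\omega d_2+\omega^2 d_3: d_i\in D_i\}\subseteq\mathbb{F}_8^m$. For an ordered finite set $D\subseteq\mathbb{F}_q^m$, $C_D=\{(v\cdot d)_{d\in D}: v\in\mathbb{F}_q^m\}$, where $v\cdot d=\sum_{i=1}^m v_id_i$. Given a linear code $C$ over $\mathbb{F}_{q^r}$ with generator matrix $(g_{ij})$ and an ordered basis $\{b_1<\dots<b_r\}$ of $\mathbb{F}_{q^r}$ over $\mathbb{F}_q$, the subfield code $C^{(q)}$ is the $\mathbb{F}_q$-linear code generated by the matrix obtained by replacing each entry $g_{ij}$ by the column $(\mathrm{Tr}_{q^r/q}(g_{ij}b_1),\dots,\mathrm{Tr}_{q^r/q}(g_{ij}b_r))^T$; here $C_D^{(2)}$ denotes the subfield code of $C_D$. *)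

From HB Require Import structures.
From mathcomp Require Import all_boot all_order all_algebra all_field.
Set Implicit Arguments. Unset Strict Implicit. Unset Printing Implicit Defensive.
Import GRing.Theory.
Local Open Scope ring_scope.

(* Codes are represented extensionally: a word indexed by the finite
   coordinate set J is a function J -> F; a code is a predicate on words. *)

Definition in_span (F : fieldType) (I J : finType) (rows : I -> J -> F)
  (w : J -> F) : Prop :=
  exists x : I -> F, forall j, w j = \sum_(i : I) x i * rows i j.

Definition gen_code (F : fieldType) (I J : finType) (G : I -> J -> F) :=
  in_span G.

(* Absolute trace Tr_{F_8/F_2}(x) = x + x^2 + x^4 for a degree-3 extension
   L of F_2; the value lies in the prime field F_2 = <<1>>, and we read it
   off as the coordinate of x + x^2 + x^4 on the basis [1]. *)
Definition tr82 (L : fieldExtType 'F_2) (x : L) : 'F_2 :=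
  coord [tuple (1 : L)] ord0 (x + x ^+ 2 + x ^+ 4).

(* Subfield code C^(2) w.r.t. the ordered basis b_0 < b_1 < b_2 of L over F_2:
   the binary code generated by the matrix obtained from G by replacing each
   entry g_ij by the column (Tr(g_ij b_0), Tr(g_ij b_1), Tr(g_ij b_2))^T,
   i.e. whose rows are indexed by the pairs (i, l), l < 3. *)
Definition subfield_code (L : fieldExtType 'F_2) (b : 'I_3 -> L)
  (I J : finType) (G : I -> J -> L) : (J -> 'F_2) -> Prop :=
  gen_code (fun (p : I * 'I_3) (j : J) => tr82 (G p.1 j * b p.2)).

Definition dotv (F : fieldType) m (v d : 'rV[F]_m) : F := \sum_(i < m) v 0 i * d 0 i.

Definition C_D (F : fieldType) m (J : finType) (D : J -> 'rV[F]_m)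
  (w : J -> F) : Prop :=
  exists v : 'rV[F]_m, forall j, w j = dotv v (D j).

Definition gmat_CD (F : fieldType) m (J : finType) (D : J -> 'rV[F]_m) :
  'I_m -> J -> F := fun i j => D j 0 i.

Definition triples m (D1 D2 D3 : {set 'rV['F_2]_m}) :=
  {t : 'rV['F_2]_m * 'rV['F_2]_m * 'rV['F_2]_m |
     [&& t.1.1 \in D1, t.1.2 \in D2 & t.2 \in D3]}.

Definition comb3 (L : fieldExtType 'F_2) (w : L) m (d1 d2 d3 : 'rV['F_2]_m) :
  'rV[L]_m :=
  map_mx (in_alg L) d1 + w *: map_mx (in_alg L) d2 + w ^+ 2 *: map_mx (in_alg L) d3.

(* The trace Tr x = x + x^2 + x^4 is F_2-linear, because squaring is additive
   in characteristic 2 and a^2 = a on F_2.  From w^3 = w + 1 one gets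
   Tr(w^s) = 1 for s = 0, 3 and Tr(w^s) = 0 for s = 1, 2, 4, so the trace-dual
   basis of (1, w, w^2) is (1, w^2, w): for x = a + b w + c w^2 with a, b, c in
   F_2, (Tr x, Tr (x w), Tr (x w^2)) = (a, c, b).  Hence the row (i, l) of the
   generator matrix of the subfield code is row i of G_1, G_3, G_2 for
   l = 0, 1, 2; both matrices have the same rows and so generate the same code.
   Since C_D is generated by the matrix whose columns are the points of D, the
   second claim is an instance of the first. *)

From HB Require Import structures.
From mathcomp Require Import all_boot all_order all_algebra all_field.
From mathcomp Require Import ring.
Import GRing.Theory.
Set Implicit Arguments.
Unset Strict Implicit.
Unset Printing Implicit Defensive.
Local Open Scope ring_scope.

Section Trace.

Variable L : fieldExtType 'F_2.

Lemma pchar2_F2ext : 2 \in [pchar L].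
Proof. by rewrite pchar_lalg pchar_Fp. Qed.

Lemma sqrrD_F2ext (x y : L) : (x + y) ^+ 2 = x ^+ 2 + y ^+ 2.
Proof. by rewrite exprDn_pchar // pnatE // pchar2_F2ext. Qed.

Lemma tr82E (x : L) :
  tr82 x = coord [tuple 1] ord0 (x + x ^+ 2 + (x ^+ 2) ^+ 2).
Proof. by rewrite -exprM. Qed.

Lemma tr82D (x y : L) : tr82 (x + y) = tr82 x + tr82 y.
Proof. by rewrite !tr82E !sqrrD_F2ext -linearD; congr coord; ring. Qed.

Lemma tr82Z (a : 'F_2) (x : L) : tr82 (a *: x) = a * tr82 x.
Proof.
have a2 : a ^+ 2 = a by rewrite -[RHS]expf_card card_Fp.
by rewrite !tr82E !exprZn !a2 -!scalerDr linearZ.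
Qed.

Lemma tr82_alg (x : L) (a : 'F_2) :
  x + x ^+ 2 + (x ^+ 2) ^+ 2 = a%:A -> tr82 x = a.
Proof.
move=> Tx; rewrite tr82E Tx linearZ /=.
have /= -> := @coord_free _ _ 1 [tuple (1 : L)] ord0 ord0.
  by rewrite mulr1.
by rewrite seq1_free oner_neq0.
Qed.

Variable w : L.
Hypothesis hw : w ^+ 3 + w + 1 = 0.

Lemma tr82_wX s : (s <= 4)%N -> tr82 (w ^+ s) = (3 %| s)%:R.
Proof.
have w3 : w ^+ 3 = w + 1.
  by apply/eqP; rewrite -(oppr_pchar2 pchar2_F2ext (w + 1)) -addr_eq0 addrA hw.
have w4 : w ^+ 4 = w ^+ 2 + w by rewrite exprS w3 mulrDr mulr1.
have Tw : w + w ^+ 2 + (w ^+ 2) ^+ 2 = 0.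
  by rewrite -exprM w4 [w ^+ 2 + w]addrC (addrr_pchar2 pchar2_F2ext).
have tr1 : tr82 (1 : L) = 1.
  by apply: tr82_alg; rewrite !expr1n !(addrr_pchar2 pchar2_F2ext) add0r scale1r.
have trw : tr82 w = 0 by apply: tr82_alg; rewrite Tw scale0r.
have trw2 : tr82 (w ^+ 2) = 0.
  by apply: tr82_alg; rewrite -!sqrrD_F2ext Tw expr0n scale0r.
case: s => [|[|[|[|[|//]]]]] _.
- exact: tr1.
- exact: trw.
- exact: trw2.
- by rewrite w3 tr82D trw tr1 add0r.
- by rewrite w4 tr82D trw trw2 addr0.
Qed.

Lemma tr82_dual_basis (a b c : 'F_2) (l : 'I_3) :
  tr82 ((a%:A + w * b%:A + w ^+ 2 * c%:A) * w ^+ l) = [:: a; c; b]`_l.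
Proof.
have -> : (a%:A + w * b%:A + w ^+ 2 * c%:A) * w ^+ l =
          a%:A * w ^+ l + b%:A * w ^+ l.+1 + c%:A * w ^+ l.+2.
  by rewrite !exprS; ring.
rewrite !tr82D !mulr_algl !tr82Z.
by case: l => [[|[|[|//]]] ?]; rewrite !tr82_wX //= !(mulr0, mulr1, addr0, add0r).
Qed.

End Trace.

Lemma in_span_subrows (F : fieldType) (I1 I2 J : finType) (r1 : I1 -> J -> F)
    (r2 : I2 -> J -> F) (f : I1 -> I2) :
  (forall i, r1 i =1 r2 (f i)) -> forall c, in_span r1 c -> in_span r2 c.
Proof.
move=> r12 c [x cE]; exists (fun p => \sum_(i | f i == p) x i) => j.
rewrite cE (partition_big f xpredT) //=; apply: eq_bigr => p _.
by rewrite mulr_suml; apply: eq_bigr => i /eqP <-; rewrite r12.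
Qed.

Lemma in_span_reindex (F : fieldType) (I1 I2 J : finType) (r1 : I1 -> J -> F)
    (r2 : I2 -> J -> F) (f : I1 -> I2) (g : I2 -> I1) :
  cancel g f -> (forall i, r1 i =1 r2 (f i)) ->
  forall c, in_span r1 c <-> in_span r2 c.
Proof.
move=> gK r12 c; split; first exact: in_span_subrows r12 c.
by apply: (in_span_subrows (f := g)) => p j; rewrite r12 gK.
Qed.

Lemma C_D_gen_code (F : fieldType) m (J : finType) (D : J -> 'rV[F]_m) c :
  C_D D c <-> gen_code (gmat_CD D) c.
Proof.
split=> -[v hv].
  by exists (fun p => v 0 p) => j; rewrite hv.
by exists (\row_p v p) => j; rewrite hv; apply: eq_bigr => i _; rewrite mxE.
Qed.

Definition stack_index k (p : 'I_k * 'I_3) : 'I_(k + (k + k)) :=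
  match val p.2 with
  | 0 => lshift (k + k) p.1
  | 1 => rshift k (lshift k p.1)
  | _ => rshift k (rshift k p.1)
  end.

Definition unstack_index k (q : 'I_(k + (k + k))) : 'I_k * 'I_3 :=
  match split q with
  | inl i => (i, 0)
  | inr q' => match split q' with inl i => (i, 1) | inr i => (i, 2) end
  end.

Lemma unstack_indexK k : cancel (@unstack_index k) (@stack_index k).
Proof.
move=> q; rewrite /unstack_index -[in RHS](splitK q).
case: (split q) => [//|q'] /=; rewrite -[in RHS](splitK q').
by case: (split q').
Qed.

Lemma col_mx3_stack_index (R : nmodType) k n (A B C : 'M[R]_(k, n)) i l j :
  col_mx A (col_mx B C) (stack_index (i, l)) j = [:: A i j; B i j; C i j]`_l.
Proof.
by case: l => [[|[|[|//]]] ?]; rewrite /= ?(col_mxEu, col_mxEd).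
Qed.

Lemma row_mx3_stack_index (R : nmodType) n k (A B C : 'M[R]_(n, k)) r i l :
  row_mx A (row_mx B C) r (stack_index (i, l)) = [:: A r i; B r i; C r i]`_l.
Proof.
by case: l => [[|[|[|//]]] ?]; rewrite /= ?(row_mxEl, row_mxEr).
Qed.

Lemma subfield_code_stack (L : fieldExtType 'F_2) (w : L) (hw : w ^+ 3 + w + 1 = 0)
    k (J : finType) (G : 'I_k -> J -> L) (A1 A2 A3 : 'I_k -> J -> 'F_2)
    (S : 'I_(k + (k + k)) -> J -> 'F_2) :
  (forall i j, G i j = (A1 i j)%:A + w * (A2 i j)%:A + w ^+ 2 * (A3 i j)%:A) ->
  (forall i l j, S (stack_index (i, l)) j = [:: A1 i j; A3 i j; A2 i j]`_l) ->
  forall c, subfield_code (fun l : 'I_3 => w ^+ l) G c <-> gen_code S c.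
Proof.
move=> defG defS c; rewrite /subfield_code /gen_code.
apply: (in_span_reindex (@unstack_indexK k)) => -[i l] j /=.
by rewrite defG (tr82_dual_basis hw) defS.
Qed.

Theorem mainTheorem1 (L : fieldExtType 'F_2) (hdim : \dim (fullv : {vspace L}) = 3%N)
  (w : L) (hw : w ^+ 3 + w + 1 = 0) :
  (forall (k n : nat) (G1 G2 G3 : 'M['F_2]_(k, n)),
     forall c : 'I_n -> 'F_2,
       subfield_code (fun l : 'I_3 => w ^+ l)
         (fun (i : 'I_k) (j : 'I_n) =>
            (map_mx (in_alg L) G1 + w *: map_mx (in_alg L) G2
               + w ^+ 2 *: map_mx (in_alg L) G3) i j) c
       <-> gen_code (fun (i : 'I_(k + (k + k))) (j : 'I_n) =>
                       col_mx G1 (col_mx G3 G2) i j) c)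
  /\
  (forall (m : nat) (D1 D2 D3 : {set 'rV['F_2]_m}),
     forall c : triples D1 D2 D3 -> 'F_2,
       subfield_code (fun l : 'I_3 => w ^+ l)
         (gmat_CD (fun t : triples D1 D2 D3 =>
                     comb3 w (val t).1.1 (val t).1.2 (val t).2)) c
       <-> C_D (fun t : triples D1 D2 D3 =>
                  row_mx (val t).1.1 (row_mx (val t).2 (val t).1.2)) c).
Proof.
split=> [k n G1 G2 G3 c | m D1 D2 D3 c].
  apply: (subfield_code_stack hw (A1 := G1) (A2 := G2) (A3 := G3)).
    by move=> i j; rewrite !mxE.
  exact: col_mx3_stack_index.
rewrite C_D_gen_code.
apply: (subfield_code_stack hw (A1 := fun i (t : triples D1 D2 D3) => (val t).1.1 0 i)
  (A2 := fun i t => (val t).1.2 0 i) (A3 := fun i t => (val t).2 0 i)).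
  by move=> i t; rewrite /gmat_CD /comb3 !mxE.
by move=> i l t; rewrite /gmat_CD row_mx3_stack_index.
Qed.
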